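(* Let $q \in Q$ and $x \in [0,1]^{|N|}$. (i) $v^{\mathrm{tight}}_q(x) \le v^{\mathrm{agg}}_q(x) \le v^{\mathrm{disagg}}_q(x)$. (ii) If $R_q$ consists of a single path, then $v^{\mathrm{agg}}_q(x) = v^{\mathrm{disagg}}_q(x)$. (iii) If $R_q$ consists of a single simple path, then $v^{\mathrm{tight}}_q(x) = v^{\mathrm{agg}}_q(x) = v^{\mathrm{disagg}}_q(x)$.
   Context: Let $G=(N,A)$ be a finite undirected graph with edge lengths $\ell_e > 0$, and let $d>0$ be the travel range, with $\ell_e \le d$ for every edge. A path is a sequence $r=(v_0,v_1,\dots,v_m)$, $m\ge 1$, of nodes in which consecutive nodes are joined by an edge (nodes may repeat); $r$ is simple if its nodes are distinct. For $x \in \{0,1\}^N$ ($x_j = 1$ meaning a charging station at node $j$), path $r$ is repeatedly traversable under $x$ if, letting $W=(v_0,\dots,v_m,v_{m-1},\dots,v_0)$ be the round trip along $r$, at least one node of $r$ has $x_j=1$ and, in the infinite periodic repetition of $W$, the distance travelled between any two consecutive visits to nodes with a station is at most $d$. Let $Q$ be a finite set of demands; each $q\in Q$ has a flow volume $f_q \ge 0$ and a finite nonempty set $R_q$ of paths. For each $q \in Q$ and $r \in R_q$, $\mathcal{D}_{q,r}\subseteq 2^N$ is a family of node sets such that for every $x \in \{0,1\}^N$: $r$ is repeatedly traversable under $x$ if and only if $\sum_{j\in S} x_j \ge 1$ for all $S \in \mathcal{D}_{q,r}$. Define $\mathcal{C}_q = \{ \bigcup_{r \in R_q} S_r : S_r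 \in \mathcal{D}_{q,r} \text{ for each } r \in R_q\}$. For $x \in [0,1]^{|N|}$ define $v^{\mathrm{disagg}}_q(x) = \max\{ \sum_{r \in R_q} f_q z_r : z \in [0,1]^{|R_q|},\ \sum_{r\in R_q} z_r \le 1,\ \sum_{j \in S} x_j \ge z_r \ \forall r \in R_q, S \in \mathcal{D}_{q,r}\}$, $v^{\mathrm{agg}}_q(x) = \max\{ f_q y : y \in [0,1],\ \sum_{j \in S} x_j \ge y \ \forall S \in \mathcal{C}_q\}$. Let $K_q$ be the set of all concave functions $v$ on $[0,1]^{|N|}$ with $v(x') = v^{\mathrm{agg}}_q(x')$ for all $x' \in \{0,1\}^{|N|}$, and $v^{\mathrm{tight}}_q(x) = \inf_{v \in K_q} v(x)$. *)

From HB Require Import structures.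
From mathcomp Require Import all_boot all_order all_algebra.
From mathcomp Require Import classical_sets reals.
Set Implicit Arguments. Unset Strict Implicit. Unset Printing Implicit Defensive.
Import Order.TTheory GRing.Theory Num.Theory.
Local Open Scope ring_scope.
Local Open Scope classical_set_scope.

Section Defs.
Variables (R : realType) (N : finType).

Definition graph_ok (adj : rel N) (len : N -> N -> R) (d : R) : Prop :=
  0 < d /\
  forall u v, adj u v ->
    [/\ adj v u, len u v = len v u, 0 < len u v & len u v <= d].

Definition is_path (adj : rel N) (r : seq N) : Prop :=
  if r is v0 :: s then (1 <= size s)%N /\ path adj v0 s else False.

Definition simple_path (adj : rel N) (r : seq N) : Prop :=
  is_path adj r /\ uniq r.

Definition binary (x : N -> R) : Prop := forall j, x j = 0 \/ x j = 1.
Definition in_cube (x : N -> R) : Prop := forall j, 0 <= x j <= 1.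

(* Round trip W = (v_0,...,v_m,v_{m-1},...,v_0). *)
Definition round_trip (r : seq N) : seq N := r ++ behead (rev r).

(* Repeated traversability of r under binary x: some node of r has a station,
   and in the infinite periodic repetition u_0 u_1 u_2 ... of W
   (u_k = W[k mod 2m], the closing v_0 of one copy being the opening v_0 of the
   next), the distance travelled between any two consecutive visits to
   station nodes is at most d. *)
Definition traversable (len : N -> N -> R) (d : R) (x : N -> R) (r : seq N)
  : Prop :=
  if r is v0 :: _ then
    let W := round_trip r in
    let u := fun k : nat => nth v0 W (k %% (size W).-1) in
    (exists2 j, j \in r & x j = 1) /\
    forall k k' : nat, (k < k')%N -> x (u k) = 1 -> x (u k') = 1 ->
      (forall t : nat, (k < t < k')%N -> x (u t) <> 1) ->
      \sum_(k <= t < k') len (u t) (u t.+1) <= d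
  else False.

Definition inC (Rq : seq (seq N)) (Dq : seq N -> {set {set N}}) (S : {set N})
  : Prop :=
  exists sel : seq N -> {set N},
    (forall r, r \in Rq -> sel r \in Dq r) /\ S = \bigcup_(r <- Rq) sel r.

(* v^disagg_q(x) (a maximum; written as the supremum of the feasible values) *)
Definition v_disagg (fq : R) (Rq : seq (seq N)) (Dq : seq N -> {set {set N}})
  (x : N -> R) : R :=
  sup [set v | exists z : seq N -> R,
        [/\ forall r, r \in Rq -> 0 <= z r <= 1,
            \sum_(r <- Rq) z r <= 1,
            forall r S, r \in Rq -> S \in Dq r -> z r <= \sum_(j in S) x j
          & v = \sum_(r <- Rq) fq * z r]].

Definition v_agg (fq : R) (Rq : seq (seq N)) (Dq : seq N -> {set {set N}})
  (x : N -> R) : R :=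
  sup [set v | exists y : R,
        [/\ 0 <= y <= 1,
            forall S, inC Rq Dq S -> y <= \sum_(j in S) x j
          & v = fq * y]].

Definition concave_on_cube (g : (N -> R) -> R) : Prop :=
  forall x y (t : R), in_cube x -> in_cube y -> 0 <= t <= 1 ->
    t * g x + (1 - t) * g y <= g (fun j => t * x j + (1 - t) * y j).

Definition v_tight (fq : R) (Rq : seq (seq N)) (Dq : seq N -> {set {set N}})
  (x : N -> R) : R :=
  inf [set v | exists g : (N -> R) -> R,
        [/\ concave_on_cube g,
            forall x', binary x' -> g x' = v_agg fq Rq Dq x'
          & v = g x]].

End Defs.

(* v_agg is concave and agrees with itself on {0,1}^N, hence dominates
   v_tight; the infimum is over a set bounded below by 0 because every point
   of the cube is a convex combination of vertices.  For v_agg <= v_disagg,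
   take for each route the least coverage min_{S in D_r} x(S), capped at 1,
   and rescale these numbers to total at most 1: if they sum to less than 1,
   the union of the minimising sets lies in C_q and its coverage bounds the
   aggregated level.  With a single route C_q = D_r, so the two programs agree.

   For a single simple route, list the nodes route first.  The nodes visited
   between two consecutive stations of the round trip form an interval of
   this order, so on binary points the covering constraints are equivalent to
   interval constraints 1 <= c_b - c_a on the prefix sums c of x.  Moving all
   fractional prefix sums down, resp. up, by the largest amount that crosses
   no integer preserves every integral bound on their differences and writes
   x as a convex combination of two points of the polytope with fewer
   fractional prefix sums; so a concave g agreeing with v_agg on vertices is
   at least f_q on the polytope.  Writing x = y xh + (1 - y) w, where y is
   the aggregated level and xh lies in the polytope, concavity then gives
   g x >= y f_q = v_agg x. *)

From HB Require Import structures.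
From mathcomp Require Import all_boot all_order all_algebra.
From mathcomp Require Import classical_sets reals boolp.
From mathcomp Require Import zify ring lra.
Import Order.TTheory GRing.Theory Num.Theory.
Local Open Scope ring_scope.
Set Implicit Arguments. Unset Strict Implicit. Unset Printing Implicit Defensive.

Section Rounding.
Variable R : realType.
Implicit Types (a b e k : R) (c : nat -> R).

Definition shift_frac e a : R := if a \is a Num.int then a else a + e.

Lemma shift_frac_diff e a b k : k \is a Num.int ->
  (a \isn't a Num.int -> (Num.floor a)%:~R <= a + e) ->
  (b \isn't a Num.int -> b + e <= (Num.ceil b)%:~R) ->
  k <= a - b -> k <= shift_frac e a - shift_frac e b.
Proof.
rewrite /shift_frac => /intrP[z ->] ha hb kab.
case: ifPn => ai; case: ifPn => bi; [by [] | | | lra].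
- have /intrP[w aw] : a - z%:~R \is a Num.int by rewrite rpredB ?intr_int.
  have : (Num.ceil b)%:~R <= a - z%:~R :> R.
    by rewrite aw ler_int ceil_le_int -aw; lra.
  by have := hb bi; lra.
- have /intrP[w bw] : z%:~R + b \is a Num.int by rewrite rpredD ?intr_int.
  have : z%:~R + b <= (Num.floor a)%:~R :> R.
    by rewrite bw ler_int floor_ge_int -bw; lra.
  by have := ha ai; lra.
Qed.

Section RoundingStep.
Variable n : nat.

Definition frac_entries c := [set i : 'I_n.+1 | c i \isn't a Num.int].

Definition rounding_step c c' :=
  [/\ forall i, c i \is a Num.int -> c' i = c i,
      forall i j k, (i <= n)%N -> (j <= n)%N -> k \is a Num.int ->
        k <= c i - c j -> k <= c' i - c' j
    & frac_entries c' \proper frac_entries c].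

Lemma rounding_step_shift c e (i0 : 'I_n.+1) : i0 \in frac_entries c ->
  c i0 + e \is a Num.int ->
  (forall i, (i <= n)%N -> c i \isn't a Num.int ->
     (Num.floor (c i))%:~R <= c i + e <= (Num.ceil (c i))%:~R) ->
  rounding_step c (fun i => shift_frac e (c i)).
Proof.
rewrite inE => i0frac i0int cell; split.
- by move=> i ci; rewrite /shift_frac ci.
- move=> i j k ni nj kint; apply: shift_frac_diff => // [ci|cj].
    by case/andP: (cell i ni ci).
  by case/andP: (cell j nj cj).
- apply/properP; split.
    by apply/fintype.subsetP => i; rewrite !inE; apply: contra => ci; rewrite /shift_frac ci.
  by exists i0; rewrite !inE ?i0frac // /shift_frac (negbTE i0frac) i0int.
Qed.

(* sB and sA are the largest amounts by which every fractional entry can move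
   down, resp. up, without crossing an integer; c is the combination of the two
   moved vectors with weight sA / (sB + sA). *)
Lemma split_fractional c : (0 < #|frac_entries c|)%N ->
  exists c1 c2 (t : R), [/\ 0 <= t <= 1,
    forall i, c i = t * c1 i + (1 - t) * c2 i, rounding_step c c1 & rounding_step c c2].
Proof.
case/card_gt0P => i1 i1frac.
pose below (i : 'I_n.+1) := c i - (Num.floor (c i))%:~R.
pose above (i : 'I_n.+1) := (Num.ceil (c i))%:~R - c i.
case: (@arg_minP _ R _ i1 (mem (frac_entries c)) below i1frac) => iB iBfrac minB.
case: (@arg_minP _ R _ i1 (mem (frac_entries c)) above i1frac) => iA iAfrac minA.
have below_gt0 i : i \in frac_entries c -> 0 < below i.
  rewrite inE => ci; rewrite subr_gt0 lt_neqAle floor_le andbT.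
  by apply: contraNneq ci => <-; rewrite intr_int.
have above_gt0 i : i \in frac_entries c -> 0 < above i.
  rewrite inE => ci; rewrite subr_gt0 lt_neqAle ceil_ge andbT.
  by apply: contraNneq ci => ->; rewrite intr_int.
set sB := below iB; set sA := above iA.
have sB_gt0 : 0 < sB by exact: below_gt0.
have sA_gt0 : 0 < sA by exact: above_gt0.
have sBA_gt0 : 0 < sB + sA by rewrite addr_gt0.
have sBA_neq0 : sB + sA != 0 by rewrite gt_eqF.
have ord_frac i (ni : (i <= n)%N) : c i \isn't a Num.int ->
    Ordinal (ni : (i < n.+1)%N) \in frac_entries c by rewrite inE.
exists (fun i => shift_frac (- sB) (c i)), (fun i => shift_frac sA (c i)),
  (sA / (sB + sA)); split.
- rewrite divr_ge0 ?(ltW sA_gt0) ?(ltW sBA_gt0) //= ler_pdivrMr // mul1r; lra.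
- move=> i; rewrite /shift_frac; case: ifP => _; first by rewrite -mulrDl subrKC mul1r.
  clearbody sA sB; by field.
- apply: (rounding_step_shift iBfrac); first by rewrite /sB /below opprB addrC subrK intr_int.
  move=> i ni ci; have : sB <= below (Ordinal (ni : (i < n.+1)%N)) by exact/minB/ord_frac.
  by rewrite /below /=; have := ceil_ge (c i); lra.
- apply: (rounding_step_shift iAfrac); first by rewrite /sA /above addrC subrK intr_int.
  move=> i ni ci; have : sA <= above (Ordinal (ni : (i < n.+1)%N)) by exact/minA/ord_frac.
  by rewrite /above /=; have := floor_le (c i); lra.
Qed.

End RoundingStep.
End Rounding.

Section PrefixSums.
Variables (R : realType) (N : finType) (s : seq N) (j0 : N).
Hypotheses (s_uniq : uniq s) (mem_s : forall j, j \in s).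
Implicit Types (x : N -> R) (c : nat -> R).

Definition psum x i : R := \sum_(0 <= k < i) x (nth j0 s k).

Lemma psum0 x : psum x 0 = 0.
Proof. by rewrite /psum big_geq. Qed.

Lemma index_lt_size j : (index j s < size s)%N.
Proof. by rewrite index_mem. Qed.

Lemma index_le_size j : (index j s <= size s)%N.
Proof. exact/ltnW/index_lt_size. Qed.

Lemma psum_diff x a b : (a <= b <= size s)%N ->
  psum x b - psum x a = \sum_(j | (a <= index j s < b)%N) x j.
Proof.
case/andP=> ab bs; rewrite /psum (@big_cat_nat _ _ _ a 0 b) //= addrC addrK.
have /(perm_big _) -> : perm_eq (index_enum N) s.
  by apply: uniq_perm; rewrite ?index_enum_uniq // => j; rewrite mem_index_enum mem_s.
rewrite (big_nth j0) (@big_nat_widenl _ _ _ a 0) // (@big_nat_widen _ _ _ 0 b (size s)) //.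
rewrite big_nat_cond [RHS]big_nat_cond; apply: eq_big => [k|//].
by case: (ltnP k (size s)) => [ks|_]; rewrite ?andbF // index_uniq.
Qed.

Lemma psum_index x j : x j = psum x (index j s).+1 - psum x (index j s).
Proof. by rewrite /psum big_nat_recr //= addrC addrK nth_index. Qed.

Definition increments c (j : N) : R := c (index j s).+1 - c (index j s).

Lemma psum_increments c i : c 0%N = 0 -> (i <= size s)%N -> psum (increments c) i = c i.
Proof.
move=> c0 iS; rewrite /psum (eq_big_nat _ _ (F2 := fun k => c k.+1 - c k)).
  by rewrite telescope_sumr // c0 subr0.
by move=> k /andP[_ ki]; rewrite /increments index_uniq // (leq_trans ki iS).
Qed.

Definition interval_polytope (F : nat -> nat -> Prop) x :=
  in_cube x /\ forall a b, F a b -> (a <= b <= size s)%N -> 1 <= psum x b - psum x a.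

Definition nfrac x := #|frac_entries (size s) (psum x)|.

Lemma binary_of_int_psum x : in_cube x -> nfrac x = 0%N -> binary x.
Proof.
move=> x01 /eqP; rewrite cards_eq0 => /eqP no_frac j.
have int_psum i : (i <= size s)%N -> psum x i \is a Num.int.
  move=> iS; apply/negPn/negP => frac.
  have : Ordinal (iS : (i < (size s).+1)%N) \in frac_entries (size s) (psum x) by rewrite inE.
  by rewrite no_frac inE.
have /intrP[m xm] : x j \is a Num.int.
  by rewrite psum_index rpredB ?int_psum ?index_lt_size ?index_le_size.
have /andP[m0 m1] := x01 j; rewrite xm ler0z in m0.
have {}m1 : m <= 1 by rewrite -(ler_int R) -xm.
rewrite xm; have [->|->] : m = 0 \/ m = 1 by lia.
- by left.
- by right.
Qed.

Lemma interval_polytope_rounding_step F x c : interval_polytope F x ->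
  rounding_step (size s) (psum x) c ->
  interval_polytope F (increments c) /\ (nfrac (increments c) < nfrac x)%N.
Proof.
move=> [x01 Fx] [c_int c_diff c_frac].
have c0 : c 0%N = 0 by rewrite c_int psum0 ?int_num0.
have psumE i : (i <= size s)%N -> psum (increments c) i = c i by exact: psum_increments.
split; last first.
  rewrite /nfrac (_ : frac_entries _ _ = frac_entries (size s) c); first exact: proper_card.
  by apply/setP => i; rewrite !inE psumE // -ltnS.
split=> [j|a b Fab /andP[ab bs]]; last first.
  by rewrite !psumE ?(leq_trans ab) //; apply: c_diff; rewrite ?(leq_trans ab) ?int_num1 ?Fx ?ab.
have /andP[xj0 xj1] := x01 j; rewrite psum_index in xj0 xj1.
have int_m1 : (-1 : R) \is a Num.int by rewrite rpredN int_num1.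
have := c_diff _ _ 0 (index_lt_size j) (index_le_size j) (int_num0 R) xj0.
have := c_diff _ _ (-1) (index_le_size j) (index_lt_size j) int_m1.
by rewrite /increments; lra.
Qed.

Lemma interval_polytope_split F x : interval_polytope F x -> binary x \/
  exists x1 x2 (t : R), [/\ 0 <= t <= 1, x = (fun j => t * x1 j + (1 - t) * x2 j),
    interval_polytope F x1 /\ (nfrac x1 < nfrac x)%N
  & interval_polytope F x2 /\ (nfrac x2 < nfrac x)%N].
Proof.
move=> Kx; have [nx0|nx_gt0] := posnP (nfrac x); first by left; exact: binary_of_int_psum Kx.1 nx0.
right; have [c1 [c2 [t [t01 cE r1 r2]]]] := split_fractional nx_gt0.
exists (increments c1), (increments c2), t; split=> //.
- by apply/funext => j; rewrite [LHS]psum_index !cE /increments; ring.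
- exact: interval_polytope_rounding_step r1.
- exact: interval_polytope_rounding_step r2.
Qed.

Lemma concave_ge_on_interval_polytope F (g : (N -> R) -> R) (L : R) : concave_on_cube g ->
  (forall b, binary b -> interval_polytope F b -> L <= g b) ->
  forall x, interval_polytope F x -> L <= g x.
Proof.
move=> g_conc g_bin x; have [n] := ubnP (nfrac x); elim: n x => // n IH x nx Kx.
have [bx|[x1 [x2 [t [/andP[t0 t1] xE [K1 lt1] [K2 lt2]]]]]] := interval_polytope_split Kx.
  exact: g_bin.
have g1 : L <= g x1 by apply: IH K1; exact: leq_trans lt1 nx.
have g2 : L <= g x2 by apply: IH K2; exact: leq_trans lt2 nx.
have := g_conc _ _ t K1.1 K2.1; rewrite t0 t1 -xE => /(_ isT).
by apply: le_trans; nra.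
Qed.
End PrefixSums.

Section Cube.
Variables (R : realType) (N : finType).
Implicit Types (x : N -> R) (g : (N -> R) -> R).

Lemma in_cube_ge0 x : in_cube x -> forall j, 0 <= x j.
Proof. by move=> x01 j; case/andP: (x01 j). Qed.

Lemma binary_in_cube x : binary x -> in_cube x.
Proof. by move=> bx j; case: (bx j) => ->; rewrite lexx ler01. Qed.

Lemma concave_ge_on_cube g (L : R) : concave_on_cube g ->
  (forall b, binary b -> L <= g b) -> forall x, in_cube x -> L <= g x.
Proof.
move=> g_conc g_bin x x01; have [j0 _|N0] := pickP (@predT N); last first.
  by apply: g_bin => j; have := N0 j.
have mem_enum_N j : j \in enum N by rewrite mem_enum.
apply: (@concave_ge_on_interval_polytope _ _ _ j0 (enum_uniq N) mem_enum_N (fun _ _ => False)).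
- exact: g_conc.
- by move=> b bb _; exact: g_bin.
- by [].
Qed.

End Cube.

Lemma sum_bigcup_le (R : realType) (N : finType) (I : Type) (rs : seq I)
    (A : I -> {set N}) (x : N -> R) : (forall j, 0 <= x j) ->
  \sum_(j in \bigcup_(r <- rs) A r) x j <= \sum_(r <- rs) \sum_(j in A r) x j.
Proof.
move=> x0; elim: rs => [|r rs IH]; first by rewrite !big_nil big_set0.
rewrite !big_cons; apply: le_trans (lerD (lexx _) IH).
rewrite [X in X <= _]big_mkcond [X in _ <= X + _]big_mkcond.
rewrite [X in _ <= _ + X]big_mkcond -big_split /=.
apply: ler_sum => j _; rewrite inE; have := x0 j.
by case: (j \in A r); case: (j \in _) => /= xj; lra.
Qed.

Lemma bigmin_attained d (T : orderType d) (I : finType) (P : pred I) (F : I -> T) (x0 : T) :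
  \big[Order.min/x0]_(i | P i) F i = x0 \/
  exists2 i, P i & \big[Order.min/x0]_(i | P i) F i = F i.
Proof.
elim/big_rec: _ => [|i m Pi [->|[j Pj ->]]]; first by left.
- by case: leP => _; [right; exists i | left].
- by case: leP => _; right; [exists i | exists j].
Qed.

Lemma sup_eq_max (R : realType) (E : set R) (e : R) : E e -> ubound E e -> sup E = e.
Proof.
move=> Ee ub; apply/le_anti/andP; split; first by apply: ge_sup => //; exists e.
by apply: sup_upper_bound => //; split; exists e.
Qed.

Section Aggregate.
Variables (R : realType) (N : finType) (Rq : seq (seq N)) (Dq : seq N -> {set {set N}}).
Local Open Scope classical_set_scope.
Implicit Types (x : N -> R) (fq : R).

Definition agg_feasible x (y : R) :=
  0 <= y <= 1 /\ forall S, inC Rq Dq S -> y <= \sum_(j in S) x j.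

Definition agg_level x := sup [set y | agg_feasible x y].

Lemma le_agg_level x y : agg_feasible x y -> y <= agg_level x.
Proof.
move=> fy; apply: sup_upper_bound => //; split; first by exists y.
by exists 1 => y' [/andP[]].
Qed.

Lemma agg_level_feasible x : (forall j, 0 <= x j) -> agg_feasible x (agg_level x).
Proof.
move=> x0; have f0 : agg_feasible x 0 by split=> [|S _]; rewrite ?lexx ?ler01 ?sumr_ge0.
split; first by rewrite le_agg_level //=; apply: ge_sup => [|y [/andP[]]]; first by exists 0.
by move=> S CS; apply: ge_sup => [|y [_]]; [exists 0 | exact].
Qed.

Lemma v_aggE fq x : 0 <= fq -> (forall j, 0 <= x j) -> v_agg fq Rq Dq x = fq * agg_level x.
Proof.
move=> fq0 x0; apply: sup_eq_max; first by exists (agg_level x); case: (agg_level_feasible x0).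
by move=> _ [y [y01 yC ->]]; rewrite ler_wpM2l // le_agg_level.
Qed.

Lemma v_agg_ge0 fq x : 0 <= fq -> (forall j, 0 <= x j) -> 0 <= v_agg fq Rq Dq x.
Proof.
move=> fq0 x0; rewrite v_aggE // mulr_ge0 //.
by case: (agg_level_feasible x0) => /andP[].
Qed.

Lemma concave_v_agg fq : 0 <= fq -> concave_on_cube (v_agg fq Rq Dq).
Proof.
move=> fq0 x y t x01 y01 /andP[t0 t1].
have [x0 y0] := (in_cube_ge0 x01, in_cube_ge0 y01).
have mix0 j : 0 <= t * x j + (1 - t) * y j.
  by rewrite addr_ge0 // mulr_ge0 // subr_ge0.
rewrite !v_aggE // mulrCA [X in _ + X]mulrCA -mulrDr ler_wpM2l //.
have [/andP[lx0 lx1] lxC] := agg_level_feasible x0.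
have [/andP[ly0 ly1] lyC] := agg_level_feasible y0.
apply: le_agg_level; split; first by apply/andP; split; nra.
move=> S CS; rewrite big_split /= -!mulr_sumr.
by have := lxC S CS; have := lyC S CS; nra.
Qed.

Lemma v_tight_le_agg fq x : 0 <= fq -> in_cube x ->
  v_tight fq Rq Dq x <= v_agg fq Rq Dq x.
Proof.
move=> fq0 x01; apply: ge_inf; last by exists (v_agg fq Rq Dq); split=> //; exact: concave_v_agg.
exists 0 => _ [g [g_conc g_bin ->]]; apply: (concave_ge_on_cube g_conc) => // b bb.
by rewrite g_bin // v_agg_ge0 //; exact/in_cube_ge0/binary_in_cube.
Qed.

Definition disagg_feasible x (z : seq N -> R) :=
  [/\ forall r, r \in Rq -> 0 <= z r <= 1, \sum_(r <- Rq) z r <= 1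
    & forall r S, r \in Rq -> S \in Dq r -> z r <= \sum_(j in S) x j].

Lemma le_v_disagg fq x z : 0 <= fq -> disagg_feasible x z ->
  fq * \sum_(r <- Rq) z r <= v_disagg fq Rq Dq x.
Proof.
move=> fq0 [z01 z1 zD]; rewrite mulr_sumr; apply: sup_upper_bound; last by exists z.
split; first by exists (\sum_(r <- Rq) fq * z r), z.
exists fq => _ [z' [_ z'1 _ ->]]; rewrite -mulr_sumr -[leRHS]mulr1 ler_wpM2l //.
Qed.

Definition cover x r : R := \big[Num.min/1]_(S in Dq r) \sum_(j in S) x j.

Lemma cover_ge0 x r : (forall j, 0 <= x j) -> 0 <= cover x r.
Proof. by move=> x0; rewrite le_bigmin ?ler01 // => S _; exact: sumr_ge0. Qed.

Lemma cover_le1 x r : cover x r <= 1.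
Proof. exact: bigmin_le_id. Qed.

Lemma cover_le x r S : S \in Dq r -> cover x r <= \sum_(j in S) x j.
Proof. exact: bigmin_le_cond. Qed.

Lemma agg_level_le_sum_cover x : (forall j, 0 <= x j) ->
  \sum_(r <- Rq) cover x r < 1 -> agg_level x <= \sum_(r <- Rq) cover x r.
Proof.
move=> x0 cover_lt1; pose xs (S : {set N}) := \sum_(j in S) x j.
have attained r : r \in Rq -> exists2 S, S \in Dq r & cover x r = xs S.
  move=> Rr; have [c1|//] := bigmin_attained (fun S => S \in Dq r) xs 1.
  suff : cover x r <= \sum_(r <- Rq) cover x r by rewrite /cover c1 leNgt cover_lt1.
  by rewrite (big_rem r Rr) /= lerDl sumr_ge0 // => r' _; exact: cover_ge0.
pose sel r := odflt finset.set0 [pick S in Dq r | xs S == cover x r].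
have selP r : r \in Rq -> sel r \in Dq r /\ xs (sel r) = cover x r.
  move=> Rr; rewrite /sel; case: pickP => [S /andP[DS /eqP] //|none].
  by have [S DS xsS] := attained r Rr; move: (none S); rewrite DS xsS eqxx.
have C_sel : inC Rq Dq (\bigcup_(r <- Rq) sel r).
  by exists sel; split=> // r Rr; case: (selP r Rr).
apply: le_trans ((agg_level_feasible x0).2 _ C_sel) (le_trans (sum_bigcup_le _ _ x0) _).
by rewrite big_seq_cond [leRHS]big_seq_cond le_eqVlt; apply/orP; left; apply/eqP;
  apply: eq_bigr => r /andP[Rr _]; case: (selP r Rr).
Qed.

Lemma agg_level_le_disagg x : (forall j, 0 <= x j) ->
  exists2 z, disagg_feasible x z & agg_level x <= \sum_(r <- Rq) z r.
Proof.
move=> x0; pose M := \sum_(r <- Rq) cover x r.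
have M_gt0 : 0 < Num.max 1 M by rewrite lt_max ltr01.
have scaled_le r : cover x r / Num.max 1 M <= cover x r.
  by rewrite ler_pdivrMr // ler_peMr ?cover_ge0 // le_max lexx.
exists (fun r => cover x r / Num.max 1 M); first split.
- by move=> r _; rewrite divr_ge0 ?cover_ge0 ?(ltW M_gt0) // (le_trans (scaled_le r)) ?cover_le1.
- by rewrite -mulr_suml ler_pdivrMr // mul1r le_max lexx orbT.
- by move=> r S _ DS; rewrite (le_trans (scaled_le r)) ?cover_le.
rewrite -mulr_suml -/M; have [M1|M1] := leP 1 M; last by rewrite divr1 agg_level_le_sum_cover.
rewrite divff ?gt_eqF ?(lt_le_trans ltr01) //.
by case: (agg_level_feasible x0) => /andP[].
Qed.

Lemma v_agg_le_disagg fq x : 0 <= fq -> (forall j, 0 <= x j) ->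
  v_agg fq Rq Dq x <= v_disagg fq Rq Dq x.
Proof.
move=> fq0 x0; have [z fz le_z] := agg_level_le_disagg x0.
by rewrite v_aggE //; apply: le_trans (le_v_disagg fq0 fz); rewrite ler_wpM2l.
Qed.
End Aggregate.

Lemma inC_seq1 (N : finType) (r : seq N) (Dq : seq N -> {set {set N}}) (S : {set N}) :
  inC [:: r] Dq S <-> S \in Dq r.
Proof.
split=> [[sel [Dsel ->]]|DS]; first by rewrite big_seq1; apply: Dsel; rewrite mem_seq1.
by exists (fun=> S); split=> [r'|]; rewrite ?big_seq1 // mem_seq1 => /eqP ->.
Qed.

Lemma v_disagg_le_agg_seq1 (R : realType) (N : finType) fq (r : seq N)
    (Dq : seq N -> {set {set N}}) (x : N -> R) : 0 <= fq -> (forall j, 0 <= x j) ->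
  v_disagg fq [:: r] Dq x <= v_agg fq [:: r] Dq x.
Proof.
move=> fq0 x0; rewrite v_aggE //; apply: ge_sup.
  exists (\sum_(r' <- [:: r]) fq * 0), (fun=> 0); split=> //.
  - by move=> r' _; rewrite lexx ler01.
  - by rewrite big_seq1 ler01.
  - by move=> r' S _ _; exact: sumr_ge0.
move=> _ [z [z01 _ zD ->]]; rewrite big_seq1 ler_wpM2l // le_agg_level //.
split=> [|S /inC_seq1 DS]; first by apply: z01; rewrite mem_seq1.
by apply: zD; rewrite ?mem_seq1.
Qed.

Lemma cube_rescale (R : realType) (N : finType) (x : N -> R) (y : R) :
  in_cube x -> 0 < y <= 1 ->
  exists xh w, [/\ in_cube xh, in_cube w, x = (fun j => y * xh j + (1 - y) * w j)
    & forall S : {set N}, y <= \sum_(j in S) x j -> 1 <= \sum_(j in S) xh j].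
Proof.
move=> x01 /andP[y0 y1].
exists (fun j => if x j <= y then x j / y else 1).
exists (fun j => if x j <= y then 0 else (x j - y) / (1 - y)); split.
- move=> j; case: ifP => [xy|_]; last by rewrite lexx ler01.
  by have /andP[xj0 _] := x01 j; rewrite divr_ge0 ?(ltW y0) //= ler_pdivrMr // mul1r.
- move=> j; case: ifPn => [_|]; first by rewrite lexx ler01.
  rewrite -ltNge => yx; have /andP[_ xj1] := x01 j; have y1' : 0 < 1 - y by lra.
  by rewrite divr_ge0 ?subr_ge0 ?(ltW yx) ?(ltW y1') //= ler_pdivrMr // mul1r; lra.
- apply/funext => j; case: ifPn => [_|]; first by rewrite mulr0 addr0 mulrC divfK ?gt_eqF.
  rewrite -ltNge => yx; have /andP[_ xj1] := x01 j; have y1' : 1 - y != 0 by rewrite gt_eqF //; lra.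
  by rewrite mulr1 [(1 - y) * _]mulrC divfK // addrC subrK.
- move=> S yS; have [[j Sj yxj]|small] := pselect (exists2 j, j \in S & y < x j).
    rewrite (bigD1 j) //= (leNgt (x j)) yxj /= lerDl sumr_ge0 // => i _.
    case: ifP => _; last exact: ler01.
    by have /andP[xi0 _] := x01 i; rewrite divr_ge0 ?(ltW y0).
  rewrite (eq_bigr (fun j => x j / y)) => [|j Sj]; first by rewrite -mulr_suml ler_pdivlMr // mul1r.
  by case: ifPn => //; rewrite -ltNge => yxj; case: small; exists j.
Qed.

Lemma unit_step_visits (p : nat -> nat) (B : nat) : (forall t, p t < B)%N ->
  (forall t, p t.+1 <= (p t).+1 /\ p t <= (p t.+1).+1)%N ->
  forall k k', exists a b, (a <= b <= B)%N /\
    forall i, (a <= i < b)%N <-> exists2 t, (k < t < k')%N & p t = i.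
Proof.
move=> pB pstep k; elim=> [|k' [a [b [abB visited]]]].
  by exists 0%N, 0%N; split=> // i; split=> [|[t /andP[]]]; rewrite ?ltn0 ?andbF.
have [k'k|kk'] := leqP k' k.
  by exists 0%N, 0%N; split=> // i; split=> [|[t /andP[kt tk']]]; [rewrite ltn0 andbF | lia].
have [{kk'}->|k1k'] := eqVneq k' k.+1.
  exists (p k.+1), (p k.+1).+1; split; first by have := pB k.+1; lia.
  move=> i; split=> [ipi|[t kt <-]]; first by exists k.+1; lia.
  by rewrite (_ : t = k.+1) ?leqnn ?ltnSn //; lia.
have [s1 s2] := pstep k'.-1; rewrite prednK ?(leq_ltn_trans _ kk') // in s1 s2.
have /visited ab_prev : exists2 t, (k < t < k')%N & p t = p k'.-1 by exists k'.-1 => //; lia.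
exists (minn a (p k')), (maxn b (p k').+1); split; first by have := pB k'; lia.
move=> i; split=> [iab|[t kt <-]].
  have [->|ipk'] := eqVneq i (p k'); first by exists k' => //; lia.
  have [t kt pti] : exists2 t, (k < t < k')%N & p t = i by apply/visited; lia.
  by exists t => //; lia.
have [->|tk'] := eqVneq t k'; first by lia.
have : (a <= p t < b)%N by apply/visited; exists t => //; lia.
lia.
Qed.

Section SimplePath.
Variables (R : realType) (N : finType) (len : N -> N -> R) (d : R) (v0 : N) (rest : seq N).
Hypotheses (route_uniq : uniq (v0 :: rest)) (rest_gt0 : (0 < size rest)%N).
Local Notation route := (v0 :: rest).
Local Notation m := (size rest).

(* The index of the i-th node of the route is i, so along the round trip the
   index moves by unit steps. *)
Definition node_order := route ++ [seq j <- enum N | j \notin route].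

Lemma node_order_uniq : uniq node_order.
Proof.
rewrite cat_uniq route_uniq filter_uniq ?enum_uniq // andbT /=.
by apply/hasPn => j; rewrite mem_filter => /andP[].
Qed.

Lemma mem_node_order j : j \in node_order.
Proof. by rewrite mem_cat mem_filter mem_enum andbT orbN. Qed.

Lemma index_route i : (i <= m)%N -> index (nth v0 route i) node_order = i.
Proof. by move=> im; rewrite index_cat mem_nth ?index_uniq. Qed.

Definition trip_node k := nth v0 (round_trip route) (k %% (size (round_trip route)).-1).

Lemma trip_nodeE k : trip_node k = nth v0 route (minn (k %% (m + m)) (m + m - k %% (m + m))).
Proof.
rewrite /trip_node; have -> : (size (round_trip route)).-1 = (m + m)%N.
  by rewrite /round_trip size_cat size_behead size_rev /=; lia.
have := ltn_pmod k (_ : 0 < m + m)%N; set i := (k %% (m + m))%N => im.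
have {}im : (i < m + m)%N by apply: im; lia.
rewrite /round_trip nth_cat /=; case: ifPn => [iR|]; first by congr nth; lia.
rewrite -leqNgt => Ri; rewrite nth_behead nth_rev /=; last by lia.
by congr nth; lia.
Qed.

Definition trip_pos k := index (trip_node k) node_order.

Lemma trip_posE k : trip_pos k = minn (k %% (m + m)) (m + m - k %% (m + m)).
Proof. by rewrite /trip_pos trip_nodeE index_route //; lia. Qed.

Lemma trip_pos_lt k : (trip_pos k < size route)%N.
Proof. by rewrite trip_posE /=; lia. Qed.

Lemma trip_pos_step k :
  (trip_pos k.+1 <= (trip_pos k).+1 /\ trip_pos k <= (trip_pos k.+1).+1)%N.
Proof.
rewrite !trip_posE; have m2_gt0 : (0 < m + m)%N by lia.
have := ltn_pmod k m2_gt0; have -> : (k.+1 %% (m + m) = (k %% (m + m)).+1 %% (m + m))%N.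
  by rewrite -addn1 -modnDml addn1.
set i := (k %% (m + m))%N => im.
have [e|im1] := eqVneq i.+1 (m + m); first by rewrite e modnn; lia.
by rewrite modn_small; lia.
Qed.

Lemma index_node_order_lt j : (index j node_order < size route)%N = (j \in route).
Proof.
rewrite index_cat; case: ifPn => [jr|_]; first by rewrite index_mem.
by rewrite ltnNge leq_addr.
Qed.

Lemma trip_visits k k' : exists a b, (a <= b <= size node_order)%N /\
  forall j, (a <= index j node_order < b)%N <-> exists2 t, (k < t < k')%N & trip_node t = j.
Proof.
have [a [b [ab visited]]] := unit_step_visits trip_pos_lt trip_pos_step k k'.
exists a, b; split; first by move: ab; rewrite size_cat; lia.
move=> j; rewrite visited; split=> -[t kt tj]; exists t => //; last by rewrite /trip_pos tj.
by rewrite -(nth_index v0 (mem_node_order j)) -tj nth_index ?mem_node_order.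
Qed.

Lemma traversable_routeE x : traversable len d x route <->
  (exists2 j, j \in route & x j = 1) /\
  (forall k k', (k < k')%N -> x (trip_node k) = 1 -> x (trip_node k') = 1 ->
     (forall t, (k < t < k')%N -> x (trip_node t) <> 1) ->
     \sum_(k <= t < k') len (trip_node t) (trip_node t.+1) <= d).
Proof. by []. Qed.

Definition outside a b (j : N) : R := if (a <= index j node_order < b)%N then 0 else 1.

Definition blocking a b := ~ traversable len d (outside a b) route.

Lemma binary_outside a b : binary (outside a b).
Proof. by move=> j; rewrite /outside; case: ifP; [left | right]. Qed.

Local Notation polytope := (@interval_polytope R N node_order v0 blocking).

Variable Dq : seq N -> {set {set N}}.
Hypothesis traversableP : forall x, binary x ->
  (traversable len d x route <-> forall S, S \in Dq route -> 1 <= \sum_(j in S) x j).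

Lemma covering_in_polytope z : in_cube z ->
  (forall S, S \in Dq route -> 1 <= \sum_(j in S) z j) -> polytope z.
Proof.
move=> z01 zD; split=> // a b blk ab; rewrite (psum_diff _ node_order_uniq mem_node_order) //.
have [S DS small] : exists2 S, S \in Dq route & \sum_(j in S) outside a b j < 1.
  apply: contrapT => none; apply/blk/traversableP => [|S DS]; first exact: binary_outside.
  by rewrite leNgt; apply/negP => small; apply: none; exists S.
have S_inside j : j \in S -> (a <= index j node_order < b)%N.
  move=> Sj; apply: contraT => jout; move: small; rewrite (bigD1 j) //= /outside (negbTE jout).
  by rewrite ltNge lerDl sumr_ge0 // => i _; case: ifP; rewrite ?lexx ?ler01.
apply: le_trans (zD S DS) _; rewrite [leLHS]big_mkcond [leRHS]big_mkcond /=.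
apply: ler_sum => j _; case: ifPn => [/S_inside -> //|_].
by case: ifP => _; rewrite ?(in_cube_ge0 z01).
Qed.

Lemma polytope_traversable b : binary b -> polytope b -> traversable len d b route.
Proof.
(* A gap longer than d between consecutive stations would make the interval of
   nodes visited in between blocking, while b vanishes on it. *)
move=> bb [_ Kb]; have b0 j : b j <> 1 -> b j = 0 by case: (bb j).
have sum_b0 a a' : (a <= a' <= size node_order)%N ->
    (forall j, (a <= index j node_order < a')%N -> b j <> 1) -> blocking a a' -> False.
  move=> aa' no_station blk; have := Kb _ _ blk aa'.
  by rewrite (psum_diff _ node_order_uniq mem_node_order) // big1 ?ler10 // => j /no_station /b0.
apply/traversable_routeE; split.
  apply: contrapT => no_station; apply: (sum_b0 0%N (size route)).
  - by rewrite size_cat leq_addr.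
  - by move=> j; rewrite index_node_order_lt => jr bj; apply: no_station; exists j.
  - case/traversable_routeE => -[j jr]; rewrite /outside index_node_order_lt jr /=.
    by move/eqP; rewrite eq_sym oner_eq0.
move=> k k' kk' bk bk' no_station; rewrite leNgt; apply/negP => too_long.
have [a [a' [aa' visitedP]]] := trip_visits k k'.
apply: (sum_b0 a a' aa') => [j /visitedP [t kt <-]|]; first exact: no_station.
have outside_visited t : (k < t < k')%N -> outside a a' (trip_node t) = 0.
  by move=> kt; rewrite /outside (_ : (a <= _ < a')%N) //; apply/visitedP; exists t.
have outside_station t : b (trip_node t) = 1 -> outside a a' (trip_node t) = 1.
  move=> bt; rewrite /outside; case: ifP => // /visitedP [t' kt' e].
  by case: (no_station t' kt'); rewrite e.
case/traversable_routeE => _ /(_ k k' kk' (outside_station _ bk) (outside_station _ bk')) gap.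
suff : \sum_(k <= t < k') len (trip_node t) (trip_node t.+1) <= d by rewrite leNgt too_long.
apply: gap => t /outside_visited ->.
by move/eqP; rewrite eq_sym oner_eq0.
Qed.

Lemma v_agg_le_concave fq (g : (N -> R) -> R) x : 0 <= fq -> concave_on_cube g ->
  (forall b, binary b -> g b = v_agg fq [:: route] Dq b) -> in_cube x ->
  v_agg fq [:: route] Dq x <= g x.
Proof.
move=> fq0 g_conc g_bin x01; have x0 := in_cube_ge0 x01.
have g_ge0 w : in_cube w -> 0 <= g w.
  apply: (concave_ge_on_cube g_conc) => b bb.
  by rewrite g_bin // v_agg_ge0 //; exact/in_cube_ge0/binary_in_cube.
rewrite v_aggE //; have [/andP[y0 y1] yC] := agg_level_feasible [:: route] Dq x0.
set y := agg_level _ _ x in y0 y1 yC *.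
have [->|y_neq0] := eqVneq y 0; first by rewrite mulr0 g_ge0.
have y01 : 0 < y <= 1 by rewrite lt_neqAle eq_sym y_neq0 y0 y1.
have [xh [w [xh01 w01 xE xhD]]] := cube_rescale x01 y01.
have fq_le_gxh : fq <= g xh.
  apply: (concave_ge_on_interval_polytope (j0 := v0) (F := blocking)
            node_order_uniq mem_node_order g_conc).
    move=> b bb Kb; rewrite g_bin // v_aggE //; last exact/in_cube_ge0/binary_in_cube.
    rewrite -[leLHS]mulr1 ler_wpM2l // le_agg_level //.
    split=> [|S /inC_seq1]; first by rewrite lexx ler01.
    by apply: (traversableP bb).1; exact: polytope_traversable.
  by apply: covering_in_polytope => // S DS; apply: xhD; apply: yC; exact/inC_seq1.
have := g_conc _ _ y xh01 w01; rewrite y0 y1 -xE => /(_ isT).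
by apply: le_trans; have := g_ge0 _ w01; nra.
Qed.
End SimplePath.

Unset Implicit Arguments.
Set Strict Implicit.

Theorem proposition3 (R : realType) (N : finType)
  (adj : rel N) (len : N -> N -> R) (d : R)
  (Q : finType) (f : Q -> R) (Rq : Q -> seq (seq N))
  (D : Q -> seq N -> {set {set N}}) :
  graph_ok adj len d ->
  (forall q, 0 <= f q) ->
  (forall q, Rq q != [::] /\ uniq (Rq q)) ->
  (forall q r, r \in Rq q -> is_path adj r) ->
  (forall q r, r \in Rq q -> forall x : N -> R, binary x ->
      (traversable len d x r <->
       forall S, S \in D q r -> 1 <= \sum_(j in S) x j)) ->
  forall (q : Q) (x : N -> R), in_cube x ->
  [/\ v_tight (f q) (Rq q) (D q) x <= v_agg (f q) (Rq q) (D q) x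
        /\ v_agg (f q) (Rq q) (D q) x <= v_disagg (f q) (Rq q) (D q) x,
      (forall r, Rq q = [:: r] ->
         v_agg (f q) (Rq q) (D q) x = v_disagg (f q) (Rq q) (D q) x)
    & (forall r, Rq q = [:: r] -> simple_path adj r ->
         v_tight (f q) (Rq q) (D q) x = v_agg (f q) (Rq q) (D q) x
         /\ v_agg (f q) (Rq q) (D q) x = v_disagg (f q) (Rq q) (D q) x)].
Proof.
move=> _ f_ge0 _ _ D_traversable q x x01; have x0 := in_cube_ge0 x01.
have agg_le_disagg := v_agg_le_disagg (Rq q) (D q) (f_ge0 q) x0.
have tight_le_agg := v_tight_le_agg (Rq q) (D q) (f_ge0 q) x01.
have agg_eq_disagg r : Rq q = [:: r] ->
    v_agg (f q) (Rq q) (D q) x = v_disagg (f q) (Rq q) (D q) x.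
  by move=> Rq1; apply/le_anti; rewrite agg_le_disagg Rq1 v_disagg_le_agg_seq1 ?f_ge0.
split=> // -[|v0 rest] Rq1 [r_path route_uniq]; first by case: r_path.
have [rest_gt0 _] := r_path; split; last exact: agg_eq_disagg Rq1.
apply/le_anti; rewrite tight_le_agg /=; apply: lb_le_inf.
  exists (v_agg (f q) (Rq q) (D q) x), (v_agg (f q) (Rq q) (D q)).
  by split=> //; exact: concave_v_agg.
move=> _ [g [g_conc g_bin ->]]; rewrite Rq1 in g_bin *.
apply: (v_agg_le_concave (len := len) (d := d) route_uniq rest_gt0 _ (f_ge0 q) g_conc g_bin x01).
by apply: D_traversable; rewrite Rq1 mem_seq1.
Qed.
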